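(* For any Dyck path $\lambda\in\mathbf D_N$, \[ \prod_{\substack{1<i\le N\\ r_i(\lambda)=r_{i-1}(\lambda)+1}}\bigl(1+z\,t^{-r_i(\lambda)}\bigr)=\prod_{\substack{1<i\le N\\ c_i(\lambda)=c_{i-1}(\lambda)+1}}\bigl(1+z\,t^{-c_i(\lambda)}\bigr). \]
   Context: A Dyck path $\lambda\in\mathbf D_N$ is a lattice path of south and east unit steps from $(0,N)$ to $(N,0)$ lying weakly below the segment joining these points; the staircase path $\delta$ alternates south and east steps. $r_i(\lambda)$ is the number of lattice squares in the $i$-th row (rows numbered north to south) lying above $\lambda$ and below $\delta$; $c_i(\lambda)$ is the number of such squares in the $i$-th column, columns numbered from right to left (equivalently $c_i(\lambda)=r_i(\lambda^* )$ for the transposed path). $z,t$ are indeterminates. *)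

From HB Require Import structures.
From mathcomp Require Import all_boot all_order all_algebra.
Set Implicit Arguments. Unset Strict Implicit. Unset Printing Implicit Defensive.
Import Order.TTheory GRing.Theory Num.Theory.

(* A lattice path from (0,N) to (N,0) is encoded by its sequence of unit
   steps: [true] = south step, [false] = east step. *)

(* Dyck path of size N: N south and N east steps, and the path stays weakly
   below the segment x + y = N, i.e. after every prefix the number of east
   steps does not exceed the number of south steps. *)
Definition is_dyck (N : nat) (s : seq bool) : Prop :=
  [/\ size s = (2 * N)%N, count id s = N &
      forall k, (count negb (take k s) <= count id (take k s))%N].

Fixpoint steps_before (b : bool) (k : nat) (s : seq bool) : nat :=
  match s with
  | [::] => 0
  | x :: s' =>
      if x == b then (if k is k'.+1 then steps_before b k' s' else 0)
      else (steps_before b k s').+1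
  end.

(* Row i (1 <= i <= N, numbered north to south) is the strip
   N-i <= y <= N-i+1.  The staircase delta has its south step of that row at
   x = i-1; lambda has it at x = (number of east steps before its i-th south
   step) <= i-1.  r_i = number of unit squares of row i between them. *)
Definition rowr (N : nat) (s : seq bool) (i : nat) : nat :=
  (i.-1 - steps_before true i.-1 s)%N.

(* Column i (1 <= i <= N, numbered right to left) is the strip
   N-i <= x <= N-i+1, containing the (N-i+1)-th east step (0-based index N-i).
   delta's east step there is at height i-1; lambda's is at height
   N - (number of south steps before it).  c_i = number of squares between,
   i.e. (#south before) + i - 1 - N = (#south before) - (N-i+1). *)
Definition colc (N : nat) (s : seq bool) (i : nat) : nat :=
  (steps_before false (N - i) s - (N - i).+1)%N.

From HB Require Import structures.
From mathcomp Require Import all_boot all_order all_algebra.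
From mathcomp Require Import zify.
Import GRing.Theory.

(* A row with r_i = r_(i-1) + 1 comes from two consecutive south steps, and r_i
   is the excess (#south - #east) of the prefix ending between them; dually a
   column with c_i = c_(i-1) + 1 comes from two consecutive east steps, and c_i
   is the excess between them.  A Dyck path enters each level v > 0 from below
   as often as it leaves it downwards, so at every level there are as many
   south-south as east-east junctions: both products run over the same
   multiset of exponents.  This is proved by induction on prefixes, keeping
   track of the levels 1..excess that have been crossed upwards but not yet
   downwards. *)

Set Implicit Arguments.
Unset Strict Implicit.
Unset Printing Implicit Defensive.

Fixpoint unit_ascents (s : seq nat) : seq nat :=
  if s is x :: s' then
    (if s' is y :: _ then (if y == x.+1 then [:: y] else [::]) else [::])
      ++ unit_ascents s'
  else [::].

Lemma unit_ascents_cons2 x y s :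
  unit_ascents [:: x, y & s] =
  (if y == x.+1 then [:: y] else [::]) ++ unit_ascents (y :: s).
Proof. by []. Qed.

Lemma unit_ascents_rcons s y :
  unit_ascents (rcons s y) =
  unit_ascents s ++ (if (s != [::]) && (y == (last 0 s).+1) then [:: y] else [::]).
Proof.
elim: s => [|x [|x' s] IH] //; first by rewrite /= cats0.
by rewrite !rcons_cons unit_ascents_cons2 -rcons_cons IH unit_ascents_cons2 catA.
Qed.

Lemma big_unit_ascents (R : Type) (idx : R) (op : Monoid.law idx)
    (F : nat -> R) (g : nat -> nat) m n :
  \big[op/idx]_(m.+1 <= i < m + n | g i == (g i.-1).+1) F (g i)
  = \big[op/idx]_(y <- unit_ascents [seq g i | i <- iota m n]) F y.
Proof.
elim: n m => [|[|n] IH] m; first by rewrite addn0 big_geq ?big_nil.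
  by rewrite addn1 big_geq ?big_nil.
rewrite big_ltn_cond; last by lia.
rewrite -addSnnS IH unit_ascents_cons2 big_cat.
by case: ifP; rewrite ?big_cons big_nil ?Monoid.simpm.
Qed.

Lemma rev_map_iota (h : nat -> nat) n :
  rev [seq h i | i <- iota 0 n] = [seq h (n - i) | i <- iota 1 n].
Proof.
elim: n => [|n IH] //.
rewrite -addn1 iotaD map_cat rev_cat IH /= add0n addn1 /= subSS subn0.
by rewrite (iotaDl 1 1 n) -map_comp; congr (_ :: _); apply/eq_map => i /=.
Qed.

Lemma steps_before_cat b k s1 s2 :
  steps_before b k (s1 ++ s2) =
  if k < count (pred1 b) s1 then steps_before b k s1
  else count (predC1 b) s1 + steps_before b (k - count (pred1 b) s1) s2.
Proof.
elim: s1 k => [|x s1 IH] k /=; first by rewrite subn0.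
case: (x =P b) => _ /=; last by rewrite IH add0n; case: ifP.
by case: k => [|k] //; rewrite IH add1n ltnS subSS.
Qed.

Definition ballot (w : seq bool) : Prop :=
  forall k, count negb (take k w) <= count id (take k w).

Definition excess (w : seq bool) : nat := count id w - count negb w.

(* Under [ballot w], [row_seq w] lists the excess just before each south
   step of [w], and [col_seq w] the excess just after each east step. *)
Definition row_seq (w : seq bool) : seq nat :=
  [seq k - steps_before true k w | k <- iota 0 (count id w)].

Definition col_seq (w : seq bool) : seq nat :=
  [seq steps_before false j w - j.+1 | j <- iota 0 (count negb w)].

Lemma size_row_seq w : size (row_seq w) = count id w.
Proof. by rewrite size_map size_iota. Qed.

Lemma row_seq_rcons w x :
  row_seq (rcons w x) = if x then rcons (row_seq w) (excess w) else row_seq w.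
Proof.
have cnt1 s : count (pred1 true) s = count id s by apply: eq_count => -[].
have cntC1 s : count (predC1 true) s = count negb s by apply: eq_count => -[].
rewrite /row_seq -cats1 count_cat iotaD map_cat.
have -> : [seq k - steps_before true k (w ++ [:: x]) | k <- iota 0 (count id w)]
          = row_seq w.
  apply/eq_in_map => k; rewrite mem_iota => /andP[_ ltk].
  by rewrite steps_before_cat cnt1 ltk.
case: x => /=; last by rewrite cats0.
by rewrite steps_before_cat cnt1 ltnn cntC1 subnn addn0 cats1.
Qed.

Lemma col_seq_rcons w x :
  col_seq (rcons w x) = if x then col_seq w else rcons (col_seq w) (excess w).-1.
Proof.
have cnt1 s : count (pred1 false) s = count negb s by apply: eq_count => -[].
have cntC1 s : count (predC1 false) s = count id s by apply: eq_count => -[].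
rewrite /col_seq -cats1 count_cat iotaD map_cat.
have -> : [seq steps_before false j (w ++ [:: x]) - j.+1 | j <- iota 0 (count negb w)]
          = col_seq w.
  apply/eq_in_map => j; rewrite mem_iota => /andP[_ ltj].
  by rewrite steps_before_cat cnt1 ltj.
case: x => /=; first by rewrite cats0.
by rewrite steps_before_cat cnt1 ltnn cntC1 subnn addn0 subnS cats1.
Qed.

Lemma ballot_count w : ballot w -> count negb w <= count id w.
Proof. by move/(_ (size w)); rewrite take_size. Qed.

Lemma ballot_rcons w x : ballot (rcons w x) -> ballot w.
Proof.
move=> bal k; have [lek|ltk] := leqP k (size w).
  by have := bal k; rewrite -cats1 takel_cat.
have := bal (size w); rewrite -cats1 takel_cat // take_size.
by rewrite take_oversize // ltnW.
Qed.

Lemma excess_rcons w x : count negb w <= count id w ->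
  excess (rcons w x) = if x then (excess w).+1 else (excess w).-1.
Proof.
by move=> le_w; rewrite /excess -cats1 !count_cat; case: x => /=; lia.
Qed.

Lemma row_seq_last w : ballot w ->
  excess w <= (last 0 (row_seq w)).+1 ?= iff last false w.
Proof.
elim/last_ind: w => [|w x IH] bal //.
have balw := ballot_rcons bal.
have cnt := ballot_count bal; rewrite -cats1 !count_cat in cnt.
rewrite row_seq_rcons excess_rcons ?ballot_count // last_rcons.
case: x bal cnt => _ /= cnt; first by rewrite last_rcons; apply/leqif_refl.
have [le_e _] := IH balw; split; [|apply/negbTE]; rewrite /excess in le_e *; lia.
Qed.

Lemma col_seq_last w : ballot w ->
  last 0 (col_seq w) <= excess w ?= iff ~~ last false w.
Proof.
elim/last_ind: w => [|w x IH] bal //.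
have balw := ballot_rcons bal.
rewrite col_seq_rcons excess_rcons ?ballot_count // last_rcons.
case: x bal => _ /=; last by rewrite last_rcons; apply/leqif_refl.
have [le_c _] := IH balw; split; [|apply/negbTE]; lia.
Qed.

(* If [w] ends with a south step, a further south step would produce a
   south-south junction at the current level: the correction term on the left. *)
Lemma count_unit_ascents_row_col w v : ballot w ->
  count_mem v (unit_ascents (row_seq w)) + (last false w && (v == excess w))
  = count_mem v (unit_ascents (rev (col_seq w))) + (0 < v <= excess w).
Proof.
elim/last_ind: w => [|w x IH] bal; first by case: v.
have balw := ballot_rcons bal; have IHv := IH balw.
have [_ eq_row] := row_seq_last balw; have [_ eq_col] := col_seq_last balw.
have cnt := ballot_count bal; rewrite -cats1 !count_cat in cnt.
rewrite row_seq_rcons col_seq_rcons excess_rcons ?ballot_count // last_rcons.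
case: x bal cnt => _ /= cnt.
  rewrite unit_ascents_rcons count_cat.
  have -> : (row_seq w != [::]) && (excess w == (last 0 (row_seq w)).+1)
            = last false w.
    case: (row_seq w =P [::]) => [row0|_]; last by rewrite eq_row.
    have : count id w = 0 by rewrite -size_row_seq row0.
    by rewrite -eq_row row0 /excess => ->.
  by move: IHv; case: (last false w) => /=; lia.
have e_pos : 0 < excess w by rewrite /excess; lia.
rewrite rev_rcons; move: IHv eq_col; case/lastP: (col_seq w) => [|s y].
  by case: (last false w) => /=; lia.
rewrite last_rcons rev_rcons unit_ascents_cons2 count_cat prednK //.
move=> IHv eq_col; set U := count_mem v (unit_ascents (y :: rev s)) in IHv *.
case: (y =P excess w) eq_col => [->|_] /= eq_col;
  by move: IHv; case: (last false w) eq_col => //= _; lia.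
Qed.

Local Open Scope ring_scope.

Theorem lemma2p2p4 (R : comUnitRingType) (z t : R) (N : nat) (lam : seq bool) :
  t \is a GRing.unit ->
  is_dyck N lam ->
  \prod_(2 <= i < N.+1 | rowr N lam i == (rowr N lam i.-1).+1)
      (1 + z * t ^- (rowr N lam i))
  = \prod_(2 <= i < N.+1 | colc N lam i == (colc N lam i.-1).+1)
      (1 + z * t ^- (colc N lam i)).
Proof.
(* Both sides are products over the same multiset, so t need not be a unit. *)
move=> _ [size_lam south_lam ballot_lam].
have east_lam : count negb lam = N.
  have := count_predC id lam.
  by rewrite size_lam south_lam (eq_count (a2 := negb)) //; lia.
have rowsE : [seq rowr N lam i | i <- iota 1 N] = row_seq lam.
  by rewrite /row_seq south_lam (iotaDl 1 0 N) -map_comp.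
have colsE : [seq colc N lam i | i <- iota 1 N] = rev (col_seq lam).
  by rewrite /col_seq east_lam rev_map_iota.
rewrite -[N.+1]add1n.
rewrite (big_unit_ascents _ (fun y => 1 + z * t ^- y) (rowr N lam)) rowsE.
rewrite (big_unit_ascents _ (fun y => 1 + z * t ^- y) (colc N lam)) colsE.
apply/perm_big/allP => v _; apply/eqP.
have := count_unit_ascents_row_col v ballot_lam.
have [_ ends_east] := row_seq_last ballot_lam.
rewrite /excess south_lam east_lam subnn in ends_east *.
by rewrite -ends_east /=; lia.
Qed.
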